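(* Let $(\Gamma,\lambda)$ be a tree plan. There is a function $N_\Gamma:\omega\to\omega$ such that for every $k<\omega$ and every finite set $X$ with $|X|\ge N_\Gamma(k)$, the second player (Duplicator) has a winning strategy in the $k$-round Ehrenfeucht–Fraïssé game played on the $\mathcal{L}_\Gamma$-structures $\Gamma(X)$ and $\Gamma(\omega)$. (One may take $N_\Gamma(k)=k+\ell(\Gamma)\cdot\mathsf{h}(\Gamma)$.)
   Context: Tree plans: a tree plan is a pair $(\Gamma,\lambda)$ where $\Gamma\subseteq\omega^{<\omega}$ is a finite set of finite sequences containing the empty sequence $\langle\rangle$ and closed under initial segments, and $\lambda:\Gamma\to\{1,\infty\}$ with $\lambda(\langle\rangle)=1$. For a non-empty set $X$ (and a fixed symbol $\star\notin X$), $\Gamma(X)$ is the set of finite sequences $\langle(i_0,t_0),\dots,(i_n,t_n)\rangle$ (including the empty one) such that $\langle i_0,\dots,i_n\rangle\in\Gamma$ and for each $k\le n$: $t_k=\star$ if $\lambda(\langle i_0,\dots,i_k\rangle)=1$, and $t_k\in X$ if $\lambda(\langle i_0,\dots,i_k\rangle)=\infty$. It is a tree under the initial-segment order, viewed as a structure in the language $\mathcal{L}_t$ with $\le$, root constant $\varepsilon$ (the empty sequence), meet $\sqcap$ (longest common initial segment) and $\mathtt{pred}$ (delete the last entry; $\mathtt{pred}(\varepsilon)=\varepsilon$). The map $\pi_X:\Gamma(X)\to\Gamma$ sends $\langle(i_0,t_0),\dots,(i_n,t_n)\rangle$ to $\langle i_0,\dots,i_n\rangle$; $\Gamma(\omega)$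 is $\Gamma(X)$ for $X=\omega$. The language $\mathcal{L}_\Gamma$ is $\mathcal{L}_t$ together with unary predicates $P_\sigma$ ($\sigma\in\Gamma$), interpreted by $P_\sigma=\pi_X^{-1}(\sigma)$. $\ell(\Gamma)$ is $1$ plus the maximum over $\sigma\in\Gamma$ of the number of $i\in\omega$ with $\sigma^\frown i\in\Gamma$ and $\lambda(\sigma^\frown i)=1$; $\mathsf{h}(\Gamma)$ is the maximum length of a sequence in $\Gamma$. *)

From mathcomp Require Import all_boot.
Set Implicit Arguments. Unset Strict Implicit. Unset Printing Implicit Defensive.

(* A tree plan: a finite set G of finite sequences of naturals (given as a
   list), with labelling lam : seq nat -> bool, where [lam s = true] encodes
   lambda(s) = infinity and [lam s = false] encodes lambda(s) = 1. *)
Definition tree_plan (G : seq (seq nat)) (lam : seq nat -> bool) : Prop :=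
  [::] \in G /\
  (forall s n, s \in G -> take n s \in G) /\
  lam [::] = false.

(* Elements of Gamma(X): sequences of pairs (i_k, t_k); the symbol star is
   [None], and t_k in X is [Some x]. *)
Definition elt (T : Type) := seq (nat * option T).

Definition proj (T : Type) (s : elt T) : seq nat := map fst s.

Definition in_GammaX (G : seq (seq nat)) (lam : seq nat -> bool)
    (T : eqType) (s : elt T) : bool :=
  (proj s \in G) &&
  all (fun k => lam (take k.+1 (proj s)) == isSome (nth (0, None) s k).2)
      (iota 0 (size s)).

Fixpoint lcp (T : eqType) (s t : seq T) : seq T :=
  match s, t with
  | x :: s', y :: t' => if x == y then x :: lcp s' t' else [::]
  | _, _ => [::]
  end.

Definition tpred (T : Type) (s : seq T) : seq T := take (size s).-1 s.

Inductive term : Type :=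
  | TVar of nat
  | TEps
  | TMeet of term & term
  | TPred of term.

Inductive atom : Type :=
  | AEq of term & term
  | ALe of term & term
  | AP of seq nat & term.

Fixpoint eval_term (T : eqType) (env : seq (elt T)) (t : term) : elt T :=
  match t with
  | TVar i => nth [::] env i
  | TEps => [::]
  | TMeet u v => lcp (eval_term env u) (eval_term env v)
  | TPred u => tpred (eval_term env u)
  end.

Definition holds_atom (T : eqType) (env : seq (elt T)) (a : atom) : bool :=
  match a with
  | AEq u v => eval_term env u == eval_term env v
  | ALe u v => prefix (eval_term env u) (eval_term env v)
  | AP sigma u => proj (eval_term env u) == sigma
  end.

Definition atom_ok (G : seq (seq nat)) (a : atom) : bool :=
  match a with
  | AP sigma _ => sigma \in G
  | _ => true
  end.

Definition partial_iso (G : seq (seq nat)) (A B : eqType)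
    (as_ : seq (elt A)) (bs : seq (elt B)) : Prop :=
  size as_ = size bs /\
  forall a, atom_ok G a -> holds_atom as_ a = holds_atom bs a.

Fixpoint dup_wins (G : seq (seq nat)) (lam : seq nat -> bool) (A B : eqType)
    (k : nat) (as_ : seq (elt A)) (bs : seq (elt B)) : Prop :=
  match k with
  | 0 => partial_iso G as_ bs
  | k'.+1 =>
      (forall a, in_GammaX G lam a ->
         exists2 b, in_GammaX G lam b & dup_wins G lam k' (rcons as_ a) (rcons bs b)) /\
      (forall b, in_GammaX G lam b ->
         exists2 a, in_GammaX G lam a & dup_wins G lam k' (rcons as_ a) (rcons bs b))
  end.

Definition EF_dup_wins (G : seq (seq nat)) (lam : seq nat -> bool)
    (A B : eqType) (k : nat) : Prop :=
  @dup_wins G lam A B k [::] [::].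

From mathcomp Require Import all_boot.
Set Implicit Arguments. Unset Strict Implicit. Unset Printing Implicit Defensive.

(* Duplicator wins the k-round game on Gamma(X) and Gamma(omega) as soon as
   |X| >= k; in particular N(k) = k works for every tree plan.

   Positions are compared through two invariants: each chosen element of
   Gamma(A) has the same *shape* (the sequence of indices i_n together with
   the information whether t_n is a label or the star) as its partner, and
   the pairwise meets of the chosen elements have the same depths on both
   sides.  Every L_Gamma term evaluates to an initial segment of a chosen
   element, whose position and length are determined by the meet depths;
   hence such "similar" positions are partial isomorphisms.  A similar
   position can be extended by any new move: the answer copies the deepest
   meet of the move with the chosen elements and continues with the same
   shape, using one fresh label at the branching point.  At most as many
   labels are forbidden as there are chosen elements, so |X| >= k labels
   suffice for k rounds, and omega always has enough. *)

Section LongestCommonPrefix.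
Variable T : eqType.
Implicit Types s u w : seq T.

Lemma lcps0 s : lcp s [::] = [::].
Proof. by case: s. Qed.

Lemma lcpss s : lcp s s = s.
Proof. by elim: s => //= x s ->; rewrite eqxx. Qed.

Lemma lcpC s u : lcp s u = lcp u s.
Proof.
elim: s u => [|x s IH] [|y u] //=.
by have [->|ne] := eqVneq x y; rewrite ?IH // eq_sym (negPf ne).
Qed.

Lemma lcpP n s u :
  (n <= size (lcp s u)) = [&& n <= size s, n <= size u & take n s == take n u].
Proof.
elim: s n u => [|x s IH] [|n] [|y u] //=; rewrite ?andbF //.
rewrite !ltnS eqseq_cons; have [->|ne] := eqVneq x y => /=; first exact: IH.
by rewrite !andbF.
Qed.

Lemma take_lcp n m s u :
  lcp (take n s) (take m u) = take (minn (minn n m) (size (lcp s u))) s.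
Proof.
elim: s n m u => [|x s IH] [|n] [|m] [|y u] //=; rewrite ?min0n ?minn0 ?lcps0 //.
by have [->|ne] := eqVneq x y => //=; rewrite !minnSS /= IH.
Qed.

Lemma prefix_lcp s u : prefix s u = (size (lcp s u) == size s).
Proof. by elim: s u => [|x s IH] [|y u] //=; have [->|ne] := eqVneq x y => /=. Qed.

Lemma eq_lcp s u : (s == u) = (size (lcp s u) == size s) && (size (lcp s u) == size u).
Proof.
elim: s u => [|x s IH] [|y u] //=.
by rewrite eqseq_cons; have [->|ne] := eqVneq x y => /=.
Qed.

Lemma size_lcp_take d s w : size (lcp (take d s) w) = minn d (size (lcp s w)).
Proof.
elim: s d w => [|x s IH] [|d] [|y w] //=; rewrite ?min0n ?minn0 //.
by case: eqP => _ //=; rewrite IH minnSS.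
Qed.

Lemma lcp_agree d s u w :
  take d s = take d u -> minn d (size (lcp s w)) = minn d (size (lcp u w)).
Proof. by move=> agree; rewrite -!size_lcp_take agree. Qed.

Lemma lcp_extend x0 d s u : take d s = take d u -> d < size s -> d < size u ->
  nth x0 s d = nth x0 u d -> d < size (lcp s u).
Proof.
move=> agree ds du same; rewrite lcpP ds du.
by rewrite (take_nth x0 ds) (take_nth x0 du) agree same eqxx.
Qed.
End LongestCommonPrefix.

Definition shape (T : Type) (s : elt T) : seq (nat * bool) :=
  map (fun p => (p.1, isSome p.2)) s.

Lemma size_shape (T : Type) (s : elt T) : size (shape s) = size s.
Proof. exact: size_map. Qed.

Lemma nth_shape (T : Type) (s : elt T) n :
  nth (0, false) (shape s) n = ((nth (0, None) s n).1, isSome (nth (0, None) s n).2).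
Proof. by elim: s n => [|p s IH] [|n] //=. Qed.

Lemma proj_shape (T : Type) (s : elt T) : proj s = map fst (shape s).
Proof. by rewrite /proj /shape -map_comp. Qed.

Lemma in_GammaX_shape G lam (A B : eqType) (s : elt A) (u : elt B) :
  shape s = shape u -> in_GammaX G lam s = in_GammaX G lam u.
Proof.
have labelled (T : Type) (v : elt T) n :
    isSome (nth (0, None) v n).2 = (nth (0, false) (shape v) n).2.
  by rewrite nth_shape.
move=> same; rewrite /in_GammaX !proj_shape same -(size_shape s) -(size_shape u) same.
by congr (_ && _); apply: eq_all => n; rewrite !labelled same.
Qed.

Definition meet_depth (T : eqType) (env : seq (elt T)) i j :=
  size (lcp (nth [::] env i) (nth [::] env j)).

Definition similar (A B : eqType) (xs : seq (elt A)) (ys : seq (elt B)) :=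
  [/\ size xs = size ys, forall i, shape (nth [::] xs i) = shape (nth [::] ys i)
    & forall i j, meet_depth xs i j = meet_depth ys i j].

Lemma similar_sym A B xs ys : @similar A B xs ys -> similar ys xs.
Proof. by case=> same_size same_shape same_depth; split. Qed.

(* A term denotes an initial segment of a chosen element; [term_loc depth t]
   computes the index of that element and the length of the segment from the
   meet depths alone. *)
Fixpoint term_loc (depth : nat -> nat -> nat) (t : term) : nat * nat :=
  match t with
  | TVar i => (i, depth i i)
  | TEps => (0, 0)
  | TMeet u v => let p := term_loc depth u in let q := term_loc depth v in
                 (p.1, minn (minn p.2 q.2) (depth p.1 q.1))
  | TPred u => let p := term_loc depth u in (p.1, p.2.-1)
  end.

Lemma term_loc_ext depth1 depth2 t :
  depth1 =2 depth2 -> term_loc depth1 t = term_loc depth2 t.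
Proof. by move=> E; elim: t => //= [i|u -> v ->|u ->]; rewrite ?E. Qed.

Lemma eval_term_loc (T : eqType) (env : seq (elt T)) t :
  let p := term_loc (meet_depth env) t in
  eval_term env t = take p.2 (nth [::] env p.1) /\ p.2 <= size (nth [::] env p.1).
Proof.
elim: t => /= [i||u [-> Hu] v [-> Hv]|u [-> Hu]].
- by rewrite /meet_depth lcpss take_size.
- by rewrite take0.
- by rewrite take_lcp (leq_trans _ Hu) // geq_min geq_minl.
- by rewrite /tpred size_takel // take_takel ?(leq_trans _ Hu) // leq_pred.
Qed.

Lemma size_eval_term (T : eqType) (env : seq (elt T)) t :
  size (eval_term env t) = (term_loc (meet_depth env) t).2.
Proof. by have [-> ?] := eval_term_loc env t; rewrite size_takel. Qed.

Lemma size_lcp_eval_term (T : eqType) (env : seq (elt T)) u v :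
  let p := term_loc (meet_depth env) u in let q := term_loc (meet_depth env) v in
  size (lcp (eval_term env u) (eval_term env v)) =
  minn (minn p.2 q.2) (meet_depth env p.1 q.1).
Proof.
have [-> Hu] := eval_term_loc env u; have [-> _] := eval_term_loc env v.
by rewrite take_lcp size_takel // (leq_trans _ Hu) // geq_min geq_minl.
Qed.

Lemma similar_partial_iso G (A B : eqType) xs ys :
  @similar A B xs ys -> partial_iso G xs ys.
Proof.
case=> same_size same_shape same_depth; split=> // a _.
have E t : term_loc (meet_depth xs) t = term_loc (meet_depth ys) t.
  exact: term_loc_ext.
case: a => [u v|u v|sigma u] /=.
- by rewrite !eq_lcp !size_lcp_eval_term !size_eval_term !E same_depth.
- by rewrite !prefix_lcp !size_lcp_eval_term !size_eval_term !E same_depth.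
- have [-> _] := eval_term_loc xs u; have [-> _] := eval_term_loc ys u.
  by rewrite /= /proj !map_take -!/(proj _) !proj_shape E same_shape.
Qed.

Definition relabel (A B : Type) (t : B) (s : elt A) : elt B :=
  [seq (p.1, if p.2 is Some _ then Some t else None) | p <- s].

Lemma shape_relabel (A B : Type) (t : B) (s : elt A) : shape (relabel t s) = shape s.
Proof. by rewrite /shape /relabel -map_comp; apply: eq_map => -[? [?|]]. Qed.

(* The answer to a move [a]: follow [y] for the first [d] entries, then
   continue with the shape of [a], using the single label [t]. *)
Definition graft (A B : Type) (y : elt B) (d : nat) (t : B) (a : elt A) : elt B :=
  take d y ++ relabel t (drop d a).

Lemma nth_rcons_if (T : Type) (x0 : T) s x n :
  nth x0 (rcons s x) n = if n == size s then x else nth x0 s n.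
Proof.
rewrite nth_rcons; case: ltngtP => [//|gt|//].
by rewrite nth_default // ltnW.
Qed.

Section Extension.
Variables (A B : eqType) (xs : seq (elt A)) (ys : seq (elt B)) (a : elt A).
Hypothesis same_size : size xs = size ys.
Hypothesis same_shape : forall i, shape (nth [::] xs i) = shape (nth [::] ys i).
Hypothesis same_depth : forall i j, meet_depth xs i j = meet_depth ys i j.
Variables (i0 : nat) (t : B).
Local Notation x0 := (nth [::] xs i0).
Local Notation y0 := (nth [::] ys i0).
Local Notation d := (size (lcp a x0)).
Hypothesis deepest : forall i, size (lcp a (nth [::] xs i)) <= d.
Hypothesis fresh : Some t \notin [seq (nth (0, None) y d).2 | y <- ys].
Local Notation b := (graft y0 d t a).

Lemma size_partner i : size (nth [::] xs i) = size (nth [::] ys i).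
Proof. by rewrite -size_shape same_shape size_shape. Qed.

Lemma move_agrees : [/\ take d a = take d x0, d <= size a & d <= size x0].
Proof. by have := lcpP d a x0; rewrite leqnn => /esym/and3P[? ? /eqP]. Qed.

(* The answer has the shape of the move, so it lies in Gamma(B) exactly when
   the move lies in Gamma(A). *)
Lemma shape_graft : shape b = shape a.
Proof.
have [agree _ _] := move_agrees.
have shape_take (T : Type) (s : elt T) : shape (take d s) = take d (shape s).
  exact: map_take.
have shape_drop (T : Type) (s : elt T) : shape (drop d s) = drop d (shape s).
  exact: map_drop.
rewrite /graft [shape _]map_cat -/(shape _) -/(shape _) shape_relabel.
by rewrite shape_take -same_shape -shape_take -agree shape_take shape_drop cat_take_drop.
Qed.

Lemma size_graft : size b = size a.
Proof. by rewrite -size_shape shape_graft size_shape. Qed.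

Lemma take_graft : take d b = take d y0.
Proof.
have [_ _ dx0] := move_agrees.
by rewrite /graft takel_cat ?size_takel -?size_partner // take_takel.
Qed.

Lemma nth_graft : d < size a ->
  nth (0, None) b d =
  ((nth (0, None) a d).1, if (nth (0, None) a d).2 is Some _ then Some t else None).
Proof.
have [_ _ dx0] := move_agrees; move=> da.
rewrite /graft nth_cat size_takel -?size_partner // ltnn subnn.
by rewrite (nth_map (0, None)) ?nth_drop ?addn0 // size_drop subn_gt0.
Qed.

Lemma depth_move j : size (lcp a (nth [::] xs j)) = minn d (meet_depth xs i0 j).
Proof.
have [agree _ _] := move_agrees.
by rewrite -(lcp_agree _ agree); apply/esym/minn_idPr/deepest.
Qed.

Lemma answer_deep_agree j :
  d <= size (lcp b (nth [::] ys j)) -> take d a = take d (nth [::] xs j).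
Proof.
move=> deep; have depth_j : size (lcp a (nth [::] xs j)) = d.
  rewrite depth_move same_depth /meet_depth -(lcp_agree _ take_graft).
  exact/minn_idPl.
by move: (lcpP d a (nth [::] xs j)); rewrite depth_j leqnn => /esym/and3P[_ _ /eqP].
Qed.

(* The fresh label keeps the answer from meeting any [y_j] deeper than [d]. *)
Lemma graft_separates j : size (lcp b (nth [::] ys j)) <= d.
Proof.
rewrite leqNgt; apply/negP => deep.
move: (deep); rewrite lcpP => /and3P[db dyj /eqP agree_b].
have same_d : nth (0, None) b d = nth (0, None) (nth [::] ys j) d.
  by rewrite -(nth_take _ (ltnSn d)) agree_b nth_take.
have da : d < size a by rewrite -size_graft.
have agree_xj := answer_deep_agree (ltnW deep).
move: same_d; rewrite nth_graft //; case label_a: (nth _ a d).2 => [v|] same_d.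
  have jy : j < size ys.
    by rewrite ltnNge; apply: contraTN dyj => /(nth_default [::]) ->.
  by apply: (negP fresh); apply/mapP; exists (nth [::] ys j); rewrite ?mem_nth -?same_d.
have entry_xj : nth (0, None) (nth [::] xs j) d = nth (0, None) a d.
  have := congr1 (fun s => nth (0, false) s d) (same_shape j).
  rewrite !nth_shape -same_d /=; case: (nth _ (nth [::] xs j) d) => k [o|] //= [->].
  by case: (nth _ a d) label_a => ? ? /= ->.
have : d < size (lcp a (nth [::] xs j)).
  by apply: (lcp_extend (x0 := (0, None)) agree_xj da); rewrite ?size_partner ?entry_xj.
by rewrite ltnNge deepest.
Qed.

Lemma depth_answer j : size (lcp b (nth [::] ys j)) = size (lcp a (nth [::] xs j)).
Proof.
rewrite [RHS]depth_move same_depth /meet_depth -(lcp_agree _ take_graft).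
by apply/esym/minn_idPr/graft_separates.
Qed.

Lemma similar_graft : similar (rcons xs a) (rcons ys b).
Proof.
split=> [|i|i j]; first by rewrite !size_rcons same_size.
  by rewrite !nth_rcons_if same_size; case: eqP => _; rewrite ?shape_graft.
rewrite /meet_depth !nth_rcons_if -same_size.
case: eqP => _; case: eqP => _; rewrite ?lcpss ?size_graft ?depth_answer //.
  by rewrite lcpC (lcpC (nth [::] ys i)) depth_answer.
exact: same_depth.
Qed.
End Extension.

Lemma exists_argmax (f : nat -> nat) n : exists i, forall j, j < n -> f j <= f i.
Proof.
elim: n => [|n [i max_i]]; first by exists 0.
have [le|lt] := leqP (f n) (f i).
  by exists i => j; rewrite ltnS leq_eqVlt => /predU1P[-> //|/max_i].
exists n => j; rewrite ltnS leq_eqVlt => /predU1P[-> //|/max_i le].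
exact: leq_trans le (ltnW lt).
Qed.

Definition has_fresh (T : eqType) (n : nat) :=
  forall L : seq T, size L < n -> exists t, t \notin L.

Lemma has_fresh_le (T : eqType) m n : m <= n -> has_fresh T n -> has_fresh T m.
Proof. by move=> le fresh L small; apply: fresh (leq_trans small le). Qed.

Lemma has_fresh_fin (X : finType) n : n <= #|X| -> has_fresh X n.
Proof.
move=> le L small; have : 0 < #|[predC L]|.
  rewrite -(ltn_add2l #|L|) addn0 cardC.
  exact: leq_ltn_trans (card_size L) (leq_trans small le).
by case/card_gt0P => t; exists t.
Qed.

Lemma has_fresh_nat n : has_fresh nat n.
Proof.
move=> L _; exists (\max_(x <- L) x).+1; apply/negP => in_L.
by have := leq_bigmax_seq (P := xpredT) (F := id) _ in_L isT; rewrite ltnn.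
Qed.

Lemma similar_extend (A B : eqType) xs ys (a : elt A) :
  similar xs ys -> has_fresh B (size xs).+1 ->
  exists b : elt B, shape b = shape a /\ similar (rcons xs a) (rcons ys b).
Proof.
case=> same_size same_shape same_depth fresh.
pose depth_a i := size (lcp a (nth [::] xs i)).
have [i0 deepest] : exists i0, forall i, depth_a i <= depth_a i0.
  have [i0 max_i0] := exists_argmax depth_a (size xs); exists i0 => i.
  have [/max_i0 //|beyond] := ltnP i (size xs).
  by rewrite /depth_a nth_default // lcps0.
pose labels := [seq (nth (0, None) y (depth_a i0)).2 | y <- ys].
have [t fresh_t] : exists t, Some t \notin labels.
  have [|t] := fresh (pmap id labels); last by rewrite mem_pmap map_id; exists t.
  by rewrite ltnS size_pmap (leq_trans (count_size _ _)) // size_map same_size.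
exists (graft (nth [::] ys i0) (depth_a i0) t a); split.
  exact: shape_graft.
exact: similar_graft.
Qed.

Lemma similar_dup_wins G lam (A B : eqType) k (xs : seq (elt A)) (ys : seq (elt B)) :
  has_fresh A (size xs + k) -> has_fresh B (size xs + k) ->
  similar xs ys -> dup_wins G lam k xs ys.
Proof.
elim: k xs ys => [|k IH] xs ys freshA freshB sim /=; first exact: similar_partial_iso.
have [same_size _ _] := sim.
split=> [a a_in|b b_in].
  have [|b [shape_b sim']] := similar_extend a sim (has_fresh_le _ freshB).
    by rewrite -addn1 leq_add2l.
  exists b; first by rewrite (in_GammaX_shape G lam shape_b).
  by apply: IH; rewrite ?size_rcons ?addSnnS.
have [|a [shape_a sim']] := similar_extend b (similar_sym sim) (has_fresh_le _ freshA).
  by rewrite -same_size -addn1 leq_add2l.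
exists a; first by rewrite (in_GammaX_shape G lam shape_a).
by apply: IH; rewrite ?size_rcons ?addSnnS -?same_size //; exact: similar_sym.
Qed.

Theorem mainTheorem5 (G : seq (seq nat)) (lam : seq nat -> bool) :
  tree_plan G lam ->
  exists N : nat -> nat,
    forall (k : nat) (X : finType),
      0 < #|X| -> N k <= #|X| -> @EF_dup_wins G lam X nat k.
Proof.
move=> _; exists id => k X _ enough.
apply: similar_dup_wins; [exact: has_fresh_fin | exact: has_fresh_nat |].
by split=> [|i|i j]; rewrite /meet_depth ?nth_nil.
Qed.
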